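(* Every Lindelöf space is selectively star-ccc. More generally, for each $k\in\mathbb{N}^+$, every $k$-star-Lindelöf space is selectively $(k+1)$-star-ccc.
   Context: No separation axioms are assumed; $\mathbb{N}^+$ is the set of positive integers. For $B\subseteq X$ and a family $\mathcal{U}$ of subsets of $X$: $\operatorname{st}^1(B,\mathcal{U})=\bigcup\{U\in\mathcal{U}:U\cap B\neq\emptyset\}$ and $\operatorname{st}^{n+1}(B,\mathcal{U})=\bigcup\{U\in\mathcal{U}:U\cap\operatorname{st}^n(B,\mathcal{U})\neq\emptyset\}$. A space $X$ is $k$-star-Lindelöf if for every open cover $\mathcal{U}$ there is a countable $\mathcal{V}\subseteq\mathcal{U}$ with $\operatorname{st}^k(\bigcup\mathcal{V},\mathcal{U})=X$. A space $X$ is selectively $k$-star-ccc if for every open cover $\mathcal{U}$ of $X$ and every sequence $(\mathcal{A}_n:n\in\omega)$ of maximal pairwise disjoint families of open subsets of $X$, there is a sequence $(A_n\in\mathcal{A}_n:n\in\omega)$ with $\operatorname{st}^k(\bigcup_{n\in\omega}A_n,\mathcal{U})=X$; selectively star-ccc means selectively $1$-star-ccc. *)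

From HB Require Import structures.
From mathcomp Require Import all_boot all_order.
From mathcomp Require Import all_classical.
From mathcomp Require Import topology.

Set Implicit Arguments.
Unset Strict Implicit.
Unset Printing Implicit Defensive.

Local Open Scope classical_set_scope.

Section StarDefs.
Variable T : topologicalType.

Definition open_cover (U : set (set T)) : Prop :=
  (forall u, U u -> open u) /\ \bigcup_(u in U) u = setT.

Definition st1 (B : set T) (U : set (set T)) : set T :=
  \bigcup_(u in [set u | U u /\ u `&` B !=set0]) u.

Fixpoint stn (n : nat) (B : set T) (U : set (set T)) : set T :=
  match n with
  | 0 => B
  | n'.+1 => st1 (stn n' B U) U
  end.

Definition Lindelof : Prop :=
  forall U, open_cover U ->
    exists V : set (set T), [/\ V `<=` U, countable V & \bigcup_(v in V) v = setT].

Definition k_star_Lindelof (k : nat) : Prop :=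
  forall U, open_cover U ->
    exists V : set (set T),
      [/\ V `<=` U, countable V & stn k (\bigcup_(v in V) v) U = setT].

Definition open_pdisj (A : set (set T)) : Prop :=
  (forall a, A a -> open a) /\
  (forall a b, A a -> A b -> a <> b -> a `&` b = set0).

Definition maximal_open_pdisj (A : set (set T)) : Prop :=
  open_pdisj A /\ (forall A', open_pdisj A' -> A `<=` A' -> A' = A).

Definition selectively_k_star_ccc (k : nat) : Prop :=
  forall (U : set (set T)) (A : nat -> set (set T)),
    open_cover U -> (forall n, maximal_open_pdisj (A n)) ->
    exists a : nat -> set T,
      (forall n, A n (a n)) /\ stn k (\bigcup_n a n) U = setT.

End StarDefs.

From mathcomp Require Import all_boot all_classical topology.

(* Let V be a countable subfamily of the cover U witnessing k-star-Lindelöfness.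
   A maximal pairwise disjoint family of open sets meets every nonempty open
   set, so from the n-th family we may pick a member meeting the n-th member of
   V.  Then every nonempty member of V meets the union B of the selection, hence
   the union of V lies in st^1(B, U), and applying st^k gives
   X = st^k(union of V, U) <= st^(k+1)(B, U).  Lindelöf is the case k = 0. *)

Set Implicit Arguments.
Unset Strict Implicit.
Unset Printing Implicit Defensive.

Local Open Scope classical_set_scope.

Section Stars.
Variable T : topologicalType.
Implicit Types (B C : set T) (U : set (set T)).

Lemma st1S B C U : B `<=` C -> st1 B U `<=` st1 C U.
Proof.
move=> BC x [u [Uu [y [uy By]]] ux]; exists u => //.
by split=> //; exists y; split=> //; apply: BC.
Qed.

Lemma stnS n B C U : B `<=` C -> stn n B U `<=` stn n C U.
Proof. by elim: n => [|n IHn] //= BC; apply/st1S/IHn. Qed.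

Lemma stn_st1 n B U : stn n.+1 B U = stn n (st1 B U) U.
Proof. by elim: n => [|n IHn] //=; rewrite -IHn. Qed.

Lemma sub_st1 (V : set (set T)) B U : V `<=` U ->
  (forall v, V v -> v !=set0 -> v `&` B !=set0) ->
  \bigcup_(v in V) v `<=` st1 B U.
Proof.
move=> VU VB y [v Vv vy]; exists v => //.
by split; [exact: VU | apply: VB; last exists y].
Qed.

End Stars.

Section MaximalDisjoint.
Variable T : topologicalType.
Implicit Types (A : set (set T)) (W : set T).

Lemma maximal_open_pdisj_neq0 A : maximal_open_pdisj A -> exists a, A a.
Proof.
move=> [_ Amax]; apply: contrapT => A0.
have A1 : [set set0] = A.
  apply: Amax => [|a Aa]; last by exfalso; apply: A0; exists a.
  by split=> [a ->|a b -> ->]; first exact: open0.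
by apply: A0; exists set0; rewrite -A1.
Qed.

(* Otherwise W could be added to A, contradicting maximality. *)
Lemma maximal_open_pdisj_meets A W : maximal_open_pdisj A ->
  open W -> W !=set0 -> exists2 a, A a & a `&` W !=set0.
Proof.
move=> [[Aopen Adisj] Amax] oW [w Ww]; apply: contrapT => AW.
have AW0 a : A a -> a `&` W = set0.
  by move=> Aa; apply: contrapT => /eqP/set0P aW; apply: AW; exists a.
have AUW : A `|` [set W] = A.
  apply: Amax => [|a Aa]; last by left.
  split=> [a [Aa|->] //|a b [Aa|->] [Bb|->] ab //]; first exact: Aopen.
  - exact: Adisj.
  - exact: AW0.
  - by rewrite setIC; apply: AW0.
have AW' : A W by rewrite -AUW; right.
by apply: AW; exists W => //; exists w.
Qed.

Lemma maximal_open_pdisj_select (V : set (set T)) (A : nat -> set (set T)) :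
  countable V -> (forall v, V v -> open v) ->
  (forall n, maximal_open_pdisj (A n)) ->
  exists a : nat -> set T, (forall n, A n (a n)) /\
    (forall v, V v -> v !=set0 -> v `&` \bigcup_n a n !=set0).
Proof.
move=> /countable_injP[f finj] Vopen Amax.
have pick n : exists a, A n a /\
    (forall v, V v -> f v = n -> v !=set0 -> a `&` v !=set0).
  have [[v [Vv fv v0]]|noV] :=
    pselect (exists v, [/\ V v, f v = n & v !=set0]).
  - have [a Aa av] := maximal_open_pdisj_meets (Amax n) (Vopen _ Vv) v0.
    exists a; split=> // v' Vv' fv' _.
    by rewrite (finj v' v) ?inE // fv fv'.
  - have [a Aa] := maximal_open_pdisj_neq0 (Amax n).
    by exists a; split=> // v Vv fv v0; exfalso; apply: noV; exists v.
have [a aP] := choice pick.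
exists a; split=> [n|v Vv v0]; first exact: (aP n).1.
have [z [az vz]] := (aP (f v)).2 v Vv erefl v0.
by exists z; split=> //; exists (f v).
Qed.

End MaximalDisjoint.

Lemma k_star_Lindelof_selectively_star_ccc (T : topologicalType) (k : nat) :
  k_star_Lindelof T k -> selectively_k_star_ccc T k.+1.
Proof.
move=> TL U A Ucov Amax.
have [V [VU Vcount VU_star]] := TL U Ucov.
have [a [aA aV]] := maximal_open_pdisj_select Vcount
  (fun v Vv => Ucov.1 v (VU v Vv)) Amax.
exists a; split=> //; apply/seteqP; split=> //.
by rewrite stn_st1 -VU_star; apply/stnS/sub_st1.
Qed.

Lemma Lindelof_k_star_Lindelof0 (T : topologicalType) :
  Lindelof T -> k_star_Lindelof T 0.
Proof. by move=> TL U Ucov; have [V [? ? ?]] := TL U Ucov; exists V. Qed.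

Theorem theorem3 (T : topologicalType) :
  (Lindelof T -> selectively_k_star_ccc T 1) /\
  (forall k : nat, (0 < k)%N -> k_star_Lindelof T k ->
     selectively_k_star_ccc T k.+1).
Proof.
split=> [TL | k _].
- exact/k_star_Lindelof_selectively_star_ccc/Lindelof_k_star_Lindelof0.
- exact: k_star_Lindelof_selectively_star_ccc.
Qed.
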